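(* Let $\Gamma$ be a layered graph with unique minimal vertex $*$. The following are equivalent: (i) $\Gamma$ is uniform. (ii) For any vertices $v,x,x'$ with $v\gtrdot x$ and $v\gtrdot x'$, there exist vertices $x_0,\dots,x_s$ and $y_1,\dots,y_s$ such that $x_0=x$, $x_s=x'$, $v\gtrdot x_i$ for all $0\le i\le s$, and $x_{i-1}\gtrdot y_i$ and $x_i\gtrdot y_i$ for all $1\le i\le s$. (iii) For any two vertex paths $(v_1,\dots,v_n)$ and $(w_1,\dots,w_n)$ with $v_1=w_1$ and $v_n=w_n=*$, there is a sequence of vertex paths $\pi_1,\dots,\pi_k$, each starting at $v_1$ and ending at $*$, with $\pi_1=(v_1,\dots,v_n)$, $\pi_k=(w_1,\dots,w_n)$, such that for $1\le i<k$ the paths $\pi_i$ and $\pi_{i+1}$ differ in at most one vertex.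
   Context: A layered graph is a finite directed graph $\Gamma=(V,E)$ with $V=\bigsqcup_{i=0}^{N}V_i$ such that every edge from $V_i$ goes to $V_{i-1}$; $V_{\ge k}=\bigsqcup_{i\ge k}V_i$, $S(v)=\{w:(v,w)\in E\}$, we write $v\gtrdot w$ for $(v,w)\in E$, every vertex outside $V_0$ has $S(v)\ne\emptyset$, and $V_0=\{*\}$. A vertex path is a sequence $(v_1,\dots,v_n)$ with $v_i\gtrdot v_{i+1}$. For $v\in V$, let $\sim_v$ be the equivalence relation on $S(v)$ that is the transitive closure of the relation $w\approx_v u$ iff $S(w)\cap S(u)\ne\emptyset$ (together with reflexivity). $\Gamma$ is uniform if for every $v\in V_{\ge2}$ all elements of $S(v)$ are $\sim_v$-equivalent. *)

From mathcomp Require Import all_boot.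
Set Implicit Arguments. Unset Strict Implicit. Unset Printing Implicit Defensive.

(* A layered graph: vertices form a finite type V, [rk v = i] means v \in V_i,
   [e v w] means v ⋗ w (edge (v,w)). *)
Definition layered (V : finType) (e : rel V) (rk : V -> nat) (star : V) : Prop :=
  [/\ (forall v w, e v w -> rk v = (rk w).+1),
      (forall v, 0 < rk v -> exists w, e v w)
    & (forall v, rk v = 0 <-> v = star)].

Definition approx (V : finType) (e : rel V) (v : V) : rel V :=
  fun w u => [&& e v w, e v u & [exists y, e w y && e u y]].

Definition simv (V : finType) (e : rel V) (v : V) : rel V :=
  connect (approx e v).

Definition uniform (V : finType) (e : rel V) (rk : V -> nat) : Prop :=
  forall v, 2 <= rk v -> forall w u, e v w -> e v u -> simv e v w u.

Definition condII (V : finType) (e : rel V) : Prop :=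
  forall v x x', e v x -> e v x' ->
    exists (s : nat) (xs ys : nat -> V),
      [/\ xs 0 = x, xs s = x',
          (forall i, i <= s -> e v (xs i))
        & (forall i, 1 <= i <= s -> e (xs i.-1) (ys i) /\ e (xs i) (ys i))].

Definition vpath_from_to (V : finType) (e : rel V) (a b : V) (p : seq V) : bool :=
  if p is x :: p' then [&& x == a, path e x p' & last x p' == b] else false.

Definition differ_le1 (V : finType) (p q : seq V) : bool :=
  (size p == size q) && (count (fun ab : V * V => ab.1 != ab.2) (zip p q) <= 1).

Definition condIII (V : finType) (e : rel V) (star : V) : Prop :=
  forall (v1 : V) (p q : seq V),
    size p = size q -> vpath_from_to e v1 star p -> vpath_from_to e v1 star q ->
    exists (k : nat) (pi : nat -> seq V),
      [/\ 1 <= k, pi 1 = p, pi k = q,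
          (forall i, 1 <= i <= k -> vpath_from_to e v1 star (pi i))
        & (forall i, 1 <= i < k -> differ_le1 (pi i) (pi i.+1))].

From mathcomp Require Import all_boot.
Set Implicit Arguments. Unset Strict Implicit. Unset Printing Implicit Defensive.

(* - (i) -> (ii): a ~_v-chain from x to x' is exactly a sequence of children of
     v in which consecutive members share a child; these shared children are
     the y_i.
   - (ii) -> (iii): by induction on the rank of the top vertex v we show that
     any two paths from v to * are linked by single-vertex changes
     (the relation [moves v]).  Paths leaving v through the same child are
     handled by the induction hypothesis; two children x_{i-1}, x_i with a
     common child y_i are bridged by the single change x_{i-1} -> x_i in
     v, x_{i-1}, y_i, ...  and (ii) chains such bridges.
   - (iii) -> (i): along a sequence of paths differing in one vertex, the
     second vertices of consecutive paths either agree, or the third vertices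
     agree and the second ones are then ≈_v-related. *)

Lemma differ_nth (V : finType) (d : V) (p q : seq V) i j :
  differ_le1 p q -> i < j -> nth d p i = nth d q i \/ nth d p j = nth d q j.
Proof.
have agree_all (p' q' : seq V) : size p' = size q' ->
    count (fun ab : V * V => ab.1 != ab.2) (zip p' q') = 0 ->
    forall k, nth d p' k = nth d q' k.
  elim: p' q' => [|a p' IH] [|b q'] //= [hs].
  by case: eqP => hab //= hc [|k] //=; apply: IH.
elim: p q i j => [|a p IH] [|b q] i j //=; first by left; rewrite !nth_nil.
rewrite /differ_le1 /= eqSS => /andP[/eqP hs].
case: (eqVneq a b) => [<-|hab] /=.
  rewrite add0n => hc; case: i => [|i]; first by left.
  by case: j => [|j] // hij; apply: IH; rewrite // /differ_le1 hs eqxx.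
rewrite add1n ltnS leqn0 => /eqP hc.
by case: i => [|i]; case: j => [|j] //= _; right; apply: agree_all.
Qed.

Lemma differ_cons (V : finType) (a : V) (p q : seq V) :
  differ_le1 (a :: p) (a :: q) = differ_le1 p q.
Proof. by rewrite /differ_le1 /= eqxx eqSS. Qed.

Lemma differ_head (V : finType) (a b : V) (p : seq V) :
  differ_le1 (a :: p) (b :: p).
Proof.
rewrite /differ_le1 /= eqxx /=.
have -> : count (fun ab : V * V => ab.1 != ab.2) (zip p p) = 0.
  by elim: p => //= c p ->; rewrite eqxx.
by case: (a != b).
Qed.

Section LayeredGraph.

Variables (V : finType) (e : rel V) (rk : V -> nat) (star : V).
Hypothesis L : layered e rk star.

Notation vpath v := (vpath_from_to e v star).

Lemma rk_edge v w : e v w -> rk v = (rk w).+1.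
Proof. by case: L => Hrk _ _; apply: Hrk. Qed.

Lemma rk0_star v : (rk v = 0) <-> (v = star).
Proof. by case: L. Qed.

Lemma rk_path x p : path e x p -> rk x = rk (last x p) + size p.
Proof.
elim: p x => [|y p IH] x /=; first by rewrite addn0.
by case/andP=> exy hp; rewrite (rk_edge exy) (IH _ hp) addnS.
Qed.

Lemma vpath_shape v p : vpath v p ->
  exists p', [/\ p = v :: p', path e v p', last v p' = star & size p' = rk v].
Proof.
case: p => [|a p] //= /and3P[/eqP-> hp /eqP hl]; exists p; split => //.
by rewrite (rk_path hp) hl (proj2 (rk0_star star) erefl).
Qed.

Lemma vpath_size v p : vpath v p -> size p = (rk v).+1.
Proof. by case/vpath_shape => p' [-> _ _ <-]. Qed.

Lemma vpath_edge v x t : e v x -> vpath x t -> vpath v (v :: t).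
Proof.
by move=> ex; case: t => //= a t /and3P[/eqP-> hp hl]; rewrite eqxx /= ex hp hl.
Qed.

Lemma path_to_star x : exists r, vpath x (x :: r).
Proof.
suff: forall n x, rk x = n -> exists r, vpath x (x :: r) by apply.
elim=> [|n IH] {}x hx.
  by exists [::]; rewrite /= eqxx; apply/eqP/rk0_star.
have [w ew] : exists w, e x w by case: L => _ Hne _; apply: Hne; rewrite hx.
have [r hr] : exists r, vpath w (w :: r) by apply: IH; move: (rk_edge ew); rewrite hx => -[].
by exists (w :: r); apply: vpath_edge hr.
Qed.

Lemma vpath_head v p : vpath v p -> 0 < rk v ->
  exists x r, [/\ p = [:: v, x & r], e v x & vpath x (x :: r)].
Proof.
case/vpath_shape => -[|x r] [-> hp hl hs] hrk; first by rewrite -hs in hrk.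
move: hp hl => /= /andP[ex hr] hl.
by exists x, r; split => //; rewrite /= eqxx hr hl eqxx.
Qed.

Lemma vpath_second v p : 2 <= rk v -> vpath v p ->
  e v (nth star p 1) /\ e (nth star p 1) (nth star p 2).
Proof.
move=> h2 hp; have [x [r [-> ex hr]]] := vpath_head hp (ltnW h2).
have rkx_pos : 0 < rk x by move: h2; rewrite (rk_edge ex).
by have [y [r' [-> exy _]]] := vpath_head hr rkx_pos.
Qed.

Inductive moves (v : V) : seq V -> seq V -> Prop :=
| moves_refl p : vpath v p -> moves v p p
| moves_step p q r : vpath v p -> differ_le1 p q -> moves v q r -> moves v p r.

Lemma moves_trans v p q r : moves v p q -> moves v q r -> moves v p r.
Proof. by elim=> // {}p {}q r' hp hd _ IH /IH; apply: moves_step. Qed.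

Lemma moves_cons v x p q : e v x -> moves x p q -> moves v (v :: p) (v :: q).
Proof.
move=> ex; elim=> [{}p hp|{}p {}q r hp hd _ IH].
  exact/moves_refl/(vpath_edge ex hp).
by apply: moves_step IH; [apply: vpath_edge ex hp | rewrite differ_cons].
Qed.

Lemma moves_chain v p q : moves v p q ->
  exists (k : nat) (pi : nat -> seq V),
    [/\ 1 <= k, pi 1 = p, pi k = q,
        (forall i, 1 <= i <= k -> vpath v (pi i))
      & (forall i, 1 <= i < k -> differ_le1 (pi i) (pi i.+1))].
Proof.
elim=> [{}p hp|{}p {}q r hp hd _ [k [pi [hk pi1 pik hv hdi]]]].
  exists 1, (fun _ => p); split=> // i /andP[hi1 hi].
  by move: (leq_trans hi hi1); rewrite ltnn.
exists k.+1, (fun i => if i <= 1 then p else pi i.-1); split => //.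
- by rewrite ltnNge hk.
- by case=> [|[|i]] //= hi; apply: hv.
- by case=> [|[|i]] //= hi; [rewrite pi1 | apply: hdi].
Qed.

Definition paths_connected (v : V) : Prop :=
  forall p q, vpath v p -> vpath v q -> moves v p q.

(* If paths are connected below v, two children x, x' with a common child y
   are bridged: (v, x, y, ...) and (v, x', y, ...) differ in one vertex. *)
Lemma moves_common_child v x x' y t t' :
  (forall w, e v w -> paths_connected w) ->
  e v x -> e v x' -> e x y -> e x' y ->
  vpath x t -> vpath x' t' -> moves v (v :: t) (v :: t').
Proof.
move=> IH ex ex' exy ex'y ht ht'; have [r hr] := path_to_star y.
have hxr := vpath_edge exy hr; have hx'r := vpath_edge ex'y hr.
apply: moves_trans (moves_cons ex (IH x ex _ _ ht hxr)) _.
apply: moves_step (moves_cons ex' (IH x' ex' _ _ hx'r ht')).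
- exact: vpath_edge ex hxr.
- by rewrite differ_cons differ_head.
Qed.

Lemma condII_step v : condII e ->
  (forall w, e v w -> paths_connected w) -> paths_connected v.
Proof.
move=> H2 IH p q hp hq; have [rk0|rk_pos] := posnP (rk v).
  have sp := vpath_size hp; have sq := vpath_size hq; move: sp sq hp hq; rewrite rk0.
  case: p => [|a [|]] //; case: q => [|b [|]] //= _ _.
  by move=> /andP[/eqP-> _] /andP[/eqP-> _]; apply: moves_refl; rewrite /= eqxx; apply/eqP/rk0_star.
have [x [r [-> ex hxr]]] := vpath_head hp rk_pos.
have [x' [r' [-> ex' hx'r']]] := vpath_head hq rk_pos.
have [s [xs [ys [xs0 xss hxs hys]]]] := H2 _ _ _ ex ex'.
suff chain : forall i, i <= s -> forall t, vpath (xs i) t -> moves v [:: v, x & r] (v :: t).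
  by apply: (chain s (leqnn s)); rewrite xss.
elim=> [|i IHi] hi t ht.
  by rewrite xs0 in ht; apply: moves_cons ex (IH x ex _ _ hxr ht).
have [y1 y2] := hys i.+1 hi; have [r0 hr0] := path_to_star (xs i).
apply: moves_trans (IHi (ltnW hi) _ hr0) _.
exact: moves_common_child IH (hxs i (ltnW hi)) (hxs i.+1 hi) y1 y2 hr0 ht.
Qed.

Lemma condII_condIII : condII e -> condIII e star.
Proof.
move=> H2 v p q _ hp hq; apply: moves_chain.
suff: forall n w, rk w = n -> paths_connected w by move/(_ _ v erefl); apply.
elim=> [|n IH] w hw; apply: condII_step => // x ex.
  by move: (rk_edge ex); rewrite hw.
by apply: IH; move: (rk_edge ex); rewrite hw => -[].
Qed.

Lemma child_low v x : e v x -> rk v < 2 -> x = star.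
Proof. by move=> ex; rewrite (rk_edge ex) !ltnS leqn0 => /eqP/rk0_star. Qed.

Lemma simv_witness v x x' : e v x -> simv e v x x' ->
  exists (s : nat) (xs ys : nat -> V),
    [/\ xs 0 = x, xs s = x', (forall i, i <= s -> e v (xs i))
      & (forall i, 1 <= i <= s -> e (xs i.-1) (ys i) /\ e (xs i) (ys i))].
Proof.
move=> ex /connectP[p hp hl]; set xs := fun i => nth x (x :: p) i.
have step i : i < size p -> approx e v (xs i) (xs i.+1) by move/(pathP x hp).
exists (size p), xs,
  (fun i => odflt star [pick y | e (xs i.-1) y && e (xs i) y]); split => //.
- by rewrite /xs /= -last_nth.
- by case=> [|i] //= hi; case/and3P: (step i hi).
- case=> [|i] //= hi; case/and3P: (step i hi) => _ _ /existsP[y hy].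
  by case: pickP => [z /andP[]|/(_ y)]; [|rewrite hy].
Qed.

Lemma uniform_condII : uniform e rk -> condII e.
Proof.
move=> HU v x x' ex ex'; apply: (simv_witness ex).
have [h2|h1] := leqP 2 (rk v); first exact: HU h2 _ _ ex ex'.
by rewrite (child_low ex h1) (child_low ex' h1); apply: connect0.
Qed.

(* The second vertices of two paths differing in at most one vertex are
   ~_v-related: either they agree, or the third vertices agree. *)
Lemma differ_second v p q : 2 <= rk v -> vpath v p -> vpath v q ->
  differ_le1 p q -> simv e v (nth star p 1) (nth star q 1).
Proof.
move=> h2 hp hq hd; have [p1 p2] := vpath_second h2 hp.
have [q1 q2] := vpath_second h2 hq.
case: (differ_nth star hd (ltnSn 1)) => [->|same3]; first exact: connect0.
apply: connect1; rewrite /approx p1 q1 /=.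
by apply/existsP; exists (nth star p 2); rewrite p2 same3 q2.
Qed.

Lemma condIII_uniform : condIII e star -> uniform e rk.
Proof.
move=> H3 v h2 x u ex eu.
have [r0 h0] := path_to_star x; have [r1 h1] := path_to_star u.
have vp0 := vpath_edge ex h0; have vp1 := vpath_edge eu h1.
have [k [pi [hk pi1 pik hv hd]]] :=
  H3 v _ _ (etrans (vpath_size vp0) (esym (vpath_size vp1))) vp0 vp1.
suff: forall i, 1 <= i <= k -> simv e v x (nth star (pi i) 1).
  by move/(_ k); rewrite hk leqnn pik; apply.
elim=> [|i IH] // /andP[_ hik]; have [->|i_pos] := posnP i.
  by rewrite pi1; apply: connect0.
have hi : 1 <= i <= k by rewrite i_pos ltnW.
apply: connect_trans (IH hi) (differ_second h2 (hv i hi) (hv i.+1 _) (hd i _)).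
- by rewrite hik.
- by rewrite i_pos hik.
Qed.

End LayeredGraph.

Theorem mainTheorem5 (V : finType) (e : rel V) (rk : V -> nat) (star : V) :
  layered e rk star ->
  [<-> uniform e rk; condII e; condIII e star].
Proof.
move=> L; tfae.
- exact: uniform_condII L.
- exact: condII_condIII L.
- exact: condIII_uniform L.
Qed.
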